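(* Let $n\ge 2$, let $A$ be a Hermitian matrix of order $n$ and let $\mathcal{O}\in\mathcal{C}_c^{(n)}$. Suppose $A'$ is obtained from $A$ by applying one cycle ($N=n(n-1)/2$ steps) of the cyclic complex Jacobi method defined by the strategy $I_{\mathcal{O}}$. If all rotation angles satisfy $|\cos\phi_k|\ge\nu>0$, $k\ge 0$, then there is a constant $\gamma_{n,\nu}$ depending only on $n$ and $\nu$ such that $$S^2(A')\le\gamma_{n,\nu}S^2(A),\qquad 0\le\gamma_{n,\nu}<1.$$
   Context: $\imath=\sqrt{-1}$. For $1\le i<j\le n$ and real $\phi,\alpha$, $R(i,j,\phi,\alpha)$ is the $n\times n$ matrix equal to $I_n$ except for entries $(i,i)=(j,j)=\cos\phi$, $(i,j)=-e^{\imath\alpha}\sin\phi$, $(j,i)=e^{-\imath\alpha}\sin\phi$. The off-norm is $S(X)=\|X-\mathrm{diag}(X)\|_F$. The complex Jacobi method on a Hermitian $A$ is the iteration $A^{(0)}=A$, $A^{(k+1)}=U_k^*A^{(k)}U_k$, where $U_k=R(i_k,j_k,\phi_k,\alpha_k)$ and the angles $\phi_k,\alpha_k$ are chosen so that the pivot entry in position $(i_k,j_k)$ (and hence $(j_k,i_k)$) of $A^{(k+1)}$ is zero. Let $\mathcal{P}_n=\{(r,s):1\le r<s\le n\}$ and $N=n(n-1)/2$. For an ordering $\mathcal{O}=(i_0,j_0),\dots,(i_{N-1},j_{N-1})$ of $\mathcal{P}_n$ (each pair appearing exactly once), the cyclic strategy $I_{\mathcal{O}}$ takes as $k$-th pivot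 pair $(i_{k\bmod N},j_{k\bmod N})$; one cycle consists of $N$ consecutive steps. $\mathcal{C}_c^{(n)}$ (column-wise orderings with permutations) is the set of orderings of the form $(1,2),(\tau_3(1),3),(\tau_3(2),3),\dots,(\tau_n(1),n),\dots,(\tau_n(n-1),n)$, where each $\tau_j$ is a permutation of $\{1,\dots,j-1\}$, $3\le j\le n$. *)

From HB Require Import structures.
From mathcomp Require Import all_boot all_order all_algebra all_fingroup.
From mathcomp Require Import complex.
From mathcomp Require Import reals trigo.
Set Implicit Arguments. Unset Strict Implicit. Unset Printing Implicit Defensive.
Import Order.TTheory GRing.Theory Num.Theory.
Local Open Scope ring_scope.

Section Jacobi.
Variable R : realType.
Local Notation C := (complex R).

Definition cR (x : R) : C := Complex x 0.
Definition cexpi (a : R) : C := Complex (cos a) (sin a).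
Definition cabs2 (z : C) : R := let: Complex a b := z in a ^+ 2 + b ^+ 2.

Definition ctrmx n (X : 'M[C]_n) : 'M[C]_n := (map_mx (@conjc R) X)^T.
Definition is_hermitian n (X : 'M[C]_n) : Prop := ctrmx X = X.

Definition offnorm n (X : 'M[C]_n) : R :=
  Num.sqrt (\sum_(r < n) \sum_(s < n | r != s) cabs2 (X r s)).

(* complex plane rotation R(i,j,phi,alpha), indices 0-based (i < j) *)
Definition rot n (i j : nat) (phi alpha : R) : 'M[C]_n :=
  \matrix_(r, s)
    if r == s then (if ((r : nat) == i) || ((r : nat) == j) then cR (cos phi) else 1)
    else if ((r : nat) == i) && ((s : nat) == j) then - (cexpi alpha * cR (sin phi))
    else if ((r : nat) == j) && ((s : nat) == i) then cexpi (- alpha) * cR (sin phi)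
    else 0.
End Jacobi.

(* Column-wise ordering with permutations (0-based):
   for columns j = 1, ..., n-1 the pairs (tau_j(0), j), ..., (tau_j(j-1), j),
   with tau_j a permutation of {0,...,j-1}. *)
Definition colperm_ordering (n : nat) (tau : forall j : nat, 'S_j)
  : seq (nat * nat) :=
  flatten [seq [seq ((tau j i : nat), j) | i <- enum 'I_j] | j <- iota 1 n.-1].

Definition in_Cc (n : nat) (O : seq (nat * nat)) : Prop :=
  exists tau : forall j : nat, 'S_j, O = colperm_ordering n tau.

Definition jacobi_cycle (R : realType) (n : nat) (O : seq (nat * nat))
  (A : 'M[complex R]_n) (phi alpha : nat -> R) (As : nat -> 'M[complex R]_n) : Prop :=
  let N := (n * n.-1)./2 in
  As 0%N = A /\
  forall k : nat, (k < N)%N ->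
    let p := nth (0%N, 0%N) O (k %% N) in
    let U := rot n p.1 p.2 (phi k) (alpha k) in
    As k.+1 = ctrmx U *m As k *m U /\
    (forall (r s : 'I_n), (r : nat) = p.1 -> (s : nat) = p.2 -> As k.+1 r s = 0).

From Pilot Require Import Defs.
From HB Require Import structures.
From mathcomp Require Import all_boot all_order all_algebra all_fingroup.
From mathcomp Require Import complex.
From mathcomp Require Import reals trigo.
From mathcomp Require Import ring lra zify.
Set Implicit Arguments. Unset Strict Implicit. Unset Printing Implicit Defensive.
Import Order.TTheory GRing.Theory Num.Theory.
Local Open Scope ring_scope.

(* Induction over the columns of the ordering.  After the rotations of the first j
   columns, the squared off-norm X' of the leading (j+1)x(j+1) block is at most gamma_j
   times its initial value X, while the squared norm Y of column j+1 above the diagonal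
   is still the initial one, as those rotations only mix its entries unitarily.  Each
   rotation of column j+1 lowers the squared off-norm of the leading (j+2)x(j+2) block by
   twice the squared modulus of its pivot.  Since |cos phi| >= nu, a rotation keeps at
   least the fraction kappa = min(nu^2,1)/2 of the squared modulus of every other entry
   of column j+1, up to the squared modulus of the entry of the leading block it is mixed
   with; hence the pivots of column j+1 carry at least kappa^(j+1) Y - X' in total.  So
   the (j+2)-block ends with squared off-norm at most X' + 2Y - 2(kappa^(j+1) Y - X')^+,
   which is at most gamma_(j+1) (X + 2Y) for
   gamma_(j+1) = 1 - (1 - gamma_j)^2 kappa^(j+1) / 2 < 1. *)

Section ComplexModulus.
Variable R : realType.
Implicit Types x y : complex R.

Lemma cabs2_ge0 x : 0 <= cabs2 x.
Proof. by case: x => a b /=; nra. Qed.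

Lemma cabs2_0 : cabs2 (0 : complex R) = 0.
Proof. by rewrite /=; ring. Qed.

Lemma cabs2M x y : cabs2 (x * y) = cabs2 x * cabs2 y.
Proof. by case: x => a b; case: y => c d /=; ring. Qed.

Lemma cabs2_conj x : cabs2 (conjc x) = cabs2 x.
Proof. by case: x => a b /=; ring. Qed.

Lemma cabs2D_ge x y : cabs2 x / 2 - cabs2 y <= cabs2 (x + y).
Proof.
case: x => a b; case: y => c d /=.
by have := sqr_ge0 (a + 2 * c); have := sqr_ge0 (b + 2 * d); nra.
Qed.

End ComplexModulus.

Section RotationCoefficients.
Variable R : realType.
Implicit Types (phi alpha : R) (x y : complex R).

Definition rot_ii phi : complex R := cR (cos phi).
Definition rot_ij phi alpha : complex R := - (cexpi alpha * cR (sin phi)).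
Definition rot_ji phi alpha : complex R := cexpi (- alpha) * cR (sin phi).

Let unit_circle_isometry (a b e f c s ca sa : R) :
  c ^+ 2 + s ^+ 2 = 1 -> ca ^+ 2 + sa ^+ 2 = 1 ->
  (a ^+ 2 + b ^+ 2 + (e ^+ 2 + f ^+ 2)) * (c ^+ 2 + s ^+ 2 * (ca ^+ 2 + sa ^+ 2)) =
  a ^+ 2 + b ^+ 2 + (e ^+ 2 + f ^+ 2).
Proof. by move=> cs csa; rewrite csa mulr1 cs mulr1. Qed.

Lemma rot_row_isometry phi alpha x y :
  cabs2 (x * rot_ii phi + y * rot_ji phi alpha) +
  cabs2 (x * rot_ij phi alpha + y * rot_ii phi) = cabs2 x + cabs2 y.
Proof.
rewrite /rot_ii /rot_ij /rot_ji /cexpi /cR sinN cosN.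
case: x => a b; case: y => e f /=.
rewrite -(unit_circle_isometry a b e f (cos2Dsin2 phi) (cos2Dsin2 alpha)).
by ring.
Qed.

Lemma rot_col_isometry phi alpha x y :
  cabs2 (conjc (rot_ii phi) * x + conjc (rot_ji phi alpha) * y) +
  cabs2 (conjc (rot_ij phi alpha) * x + conjc (rot_ii phi) * y) = cabs2 x + cabs2 y.
Proof.
rewrite /rot_ii /rot_ij /rot_ji /cexpi /cR sinN cosN.
case: x => a b; case: y => e f /=.
rewrite -(unit_circle_isometry a b e f (cos2Dsin2 phi) (cos2Dsin2 alpha)).
by ring.
Qed.

Lemma cabs2_rot_ii phi : cabs2 (rot_ii phi) = cos phi ^+ 2.
Proof. by rewrite /=; ring. Qed.

Lemma cabs2_rot_ij_le1 phi alpha : cabs2 (rot_ij phi alpha) <= 1.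
Proof.
rewrite /rot_ij /cexpi /cR /=.
have := cos2Dsin2 phi; have := cos2Dsin2 alpha.
move: (cos phi) (sin phi) (cos alpha) (sin alpha) => c s ca sa csa cs.
have -> : (- (ca * s - sa * 0)) ^+ 2 + (- (ca * 0 + sa * s)) ^+ 2 =
          s ^+ 2 * (ca ^+ 2 + sa ^+ 2) by ring.
by rewrite csa mulr1; nra.
Qed.

End RotationCoefficients.

Section NatRangeSums.
Variables (V : nmodType) (k : nat).
Implicit Types (P : pred nat) (F : nat -> V).

Lemma bigD1_nat P F i : (i < k)%N -> P i ->
  \sum_(0 <= r < k | P r) F r = F i + \sum_(0 <= r < k | P r && (r != i)) F r.
Proof.
move=> ik Pi; rewrite big_mkcond (bigD1_seq i) ?mem_index_iota ?iota_uniq //= Pi.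
congr (_ + _); rewrite [RHS]big_mkcond /= big_mkcond /=.
by apply: eq_bigr => r _; case: (P r); case: (r != i).
Qed.

Lemma bigD2_nat P F i j : (i < k)%N -> (j < k)%N -> i != j -> P i -> P j ->
  \sum_(0 <= r < k | P r) F r =
  F i + F j + \sum_(0 <= r < k | P r && (r != i) && (r != j)) F r.
Proof.
move=> ik jk ij Pi Pj; rewrite (bigD1_nat _ ik Pi) (bigD1_nat _ jk) ?addrA //=.
by rewrite Pj eq_sym.
Qed.

Lemma bigD2_nat_all F i j : (i < k)%N -> (j < k)%N -> i != j ->
  \sum_(0 <= r < k) F r = F i + F j + \sum_(0 <= r < k | (r != i) && (r != j)) F r.
Proof.
move=> ik jk ij; rewrite (bigD1_seq i) ?mem_index_iota ?iota_uniq //=.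
by rewrite (@bigD1_nat (fun r => r != i) F j) 1?eq_sym // addrA.
Qed.

End NatRangeSums.

Lemma big_nat_mul_delta (S : pzSemiRingType) k (P : pred nat) (F : nat -> S) s :
  \sum_(0 <= q < k | P q) F q * (q == s)%:R = if (s < k)%N && P s then F s else 0.
Proof.
case: (ltnP s k) => sk /=.
  rewrite big_mkcond (bigD1_seq s) ?mem_index_iota ?iota_uniq //= eqxx mulr1.
  rewrite big1 ?addr0; first by case: (P s).
  by move=> q /negbTE ->; rewrite mulr0; case: (P q).
rewrite big_nat_cond big1 // => q /andP[/andP[_ qk] _].
by rewrite (ltn_eqF (leq_trans qk sk)) mulr0.
Qed.

Section PermutedSums.
Variables (V : nmodType) (m : nat) (s : 'S_m.+1).
Local Notation sigma t := (nat_of_ord (s (inord t))).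

Lemma sum_perm_nat (F : nat -> V) :
  \sum_(0 <= t < m.+1) F (sigma t) = \sum_(0 <= r < m.+1) F r.
Proof.
rewrite !big_mkord [RHS](reindex_inj (@perm_inj _ s)).
by apply: eq_bigr => t _; rewrite inord_val.
Qed.

Lemma sum_perm_nat_neq (F : nat -> V) t : (t < m.+1)%N ->
  \sum_(0 <= t' < m.+1 | t' != t) F (sigma t') =
  \sum_(0 <= r < m.+1 | r != sigma t) F r.
Proof.
move=> tm; rewrite !big_mkord [RHS](reindex_inj (@perm_inj _ s)).
apply: eq_big => [t'|t' _]; last by rewrite inord_val.
by rewrite (inj_eq val_inj) (inj_eq (@perm_inj _ s)) -(inj_eq val_inj) /= inordK.
Qed.

Lemma sum_perm_nat2 (G : nat -> nat -> V) :
  \sum_(0 <= t < m.+1) \sum_(0 <= t' < m.+1 | t' != t) G (sigma t) (sigma t') =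
  \sum_(0 <= r < m.+1) \sum_(0 <= r' < m.+1 | r' != r) G r r'.
Proof.
rewrite -(sum_perm_nat (fun r => \sum_(0 <= r' < m.+1 | r' != r) G r r')).
rewrite big_nat_cond [RHS]big_nat_cond; apply: eq_bigr => t /andP[/andP[_ tm] _].
exact: (sum_perm_nat_neq (G (sigma t))).
Qed.

End PermutedSums.

Lemma sum_prefix_le_sum_neq (R : numDomainType) (f : nat -> R) m t :
  (t < m)%N -> (forall x, 0 <= f x) ->
  \sum_(0 <= t' < t) f t' <= \sum_(0 <= t' < m | t' != t) f t'.
Proof.
move=> tm f_ge0; rewrite (big_nat_widen 0 t m) ?(ltnW tm) //.
rewrite big_mkcond [leRHS]big_mkcond; apply: ler_sum => x _.
by case: (ltngtP x t) => //=; rewrite f_ge0.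
Qed.

Section ContractionFactor.
Variable R : realFieldType.
Implicit Types (nu c : R).

Definition kappa nu : R := Num.min (nu ^+ 2) 1 / 2.

Lemma kappa_gt0 nu : 0 < nu -> 0 < kappa nu.
Proof. by move=> nu_gt0; rewrite divr_gt0 // lt_min ltr01 exprn_gt0. Qed.

Lemma kappa_le1 nu : kappa nu <= 1.
Proof.
have : Num.min (nu ^+ 2) 1 <= 1 by rewrite ge_min lexx orbT.
by rewrite /kappa; lra.
Qed.

Lemma kappa_le_cos2 nu c : 0 < nu -> nu <= `|c| -> kappa nu <= c ^+ 2 / 2.
Proof.
move=> nu_gt0 nu_le; rewrite /kappa -(real_normK (num_real c)).
have : Num.min (nu ^+ 2) 1 <= `|c| ^+ 2.
  by rewrite ge_min lerXn2r ?nnegrE ?(ltW nu_gt0).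
lra.
Qed.

Fixpoint cycle_factor nu (j : nat) : R :=
  if j is j'.+1 then 1 - (1 - cycle_factor nu j') ^+ 2 * kappa nu ^+ j / 2 else 0.

Lemma cycle_factor_ge0_lt1 nu j : 0 < nu -> 0 <= cycle_factor nu j < 1.
Proof.
move=> nu_gt0; elim: j => [|j /andP[g_ge0 g_lt1]] /=; first by rewrite lexx ltr01.
have k_gt0 : 0 < kappa nu ^+ j.+1 by rewrite exprn_gt0 // kappa_gt0.
have k_le1 : kappa nu ^+ j.+1 <= 1 by rewrite exprn_ile1 ?kappa_le1 // ltW ?kappa_gt0.
have d_gt0 : 0 < (1 - cycle_factor nu j) ^+ 2 by rewrite exprn_gt0 // subr_gt0.
have d_le1 : (1 - cycle_factor nu j) ^+ 2 <= 1 by rewrite exprn_ile1 //; lra.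
have : 0 < (1 - cycle_factor nu j) ^+ 2 * kappa nu ^+ j.+1 by rewrite mulr_gt0.
have : (1 - cycle_factor nu j) ^+ 2 * kappa nu ^+ j.+1 <= 1 by rewrite mulr_ile1 // ltW.
by move=> *; apply/andP; split; lra.
Qed.

(* The induction step of the header, [S] being the total squared modulus of the pivots. *)
Lemma contraction_step (g q X Y X' S : R) :
  0 <= g -> g < 1 -> 0 < q -> q <= 1 -> 0 <= X -> 0 <= Y -> 0 <= X' -> 0 <= S ->
  X' <= g * X -> q * Y - X' <= S ->
  X' + 2 * Y - 2 * S <= (1 - (1 - g) ^+ 2 * q / 2) * (X + 2 * Y).
Proof.
move=> g0 g1 q0 q1 X0 Y0 X'0 S0 hX hS.
have e1 : (1 - g) * (q * Y - X') <= 2 * S.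
  case: (lerP 0 (q * Y - X')) => h.
    have : (1 - g) * (q * Y - X') <= q * Y - X'.
      by rewrite -[leRHS]mul1r ler_wpM2r //; lra.
    lra.
  have : (1 - g) * (q * Y - X') <= 0 by rewrite pmulr_rle0 ?subr_gt0 // ltW.
  lra.
have e2 : X' * (2 - g) <= g * X * (2 - g) by rewrite ler_wpM2r //; lra.
have e3 : 0 <= X * ((1 - g) ^+ 2 * (1 - q / 2)).
  by rewrite mulr_ge0 // mulr_ge0 ?sqr_ge0 //; lra.
have e4 : 0 <= Y * (q * (1 - g) * g) by rewrite !mulr_ge0 //; lra.
nra.
Qed.

End ContractionFactor.

Section Hermitian.
Variables (R : realType) (m : nat).
Implicit Types X Y : 'M[complex R]_m.

Lemma ctrmxM X Y : ctrmx (X *m Y) = ctrmx Y *m ctrmx X.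
Proof. by rewrite /ctrmx map_mxM trmx_mul. Qed.

Lemma ctrmxK : involutive (@ctrmx R m).
Proof. by move=> X; apply/matrixP => r s; rewrite !mxE conjcK. Qed.

Lemma hermitian_ctrmx_conj X Y : is_hermitian X -> is_hermitian (ctrmx Y *m X *m Y).
Proof. by move=> hX; rewrite /is_hermitian !ctrmxM ctrmxK hX mulmxA. Qed.

Lemma hermitian_entry X r s : is_hermitian X -> X s r = conjc (X r s).
Proof. by move=> hX; rewrite -{1}hX !mxE. Qed.

End Hermitian.

Section ColumnOrdering.
Local Open Scope nat_scope.

Lemma bin2S j : 'C(j.+2, 2) = 'C(j.+1, 2) + j.+1.
Proof. by rewrite binS bin1. Qed.

Lemma bin2_decomp m k : k < 'C(m.+1, 2) ->
  exists j t, [/\ j < m, t <= j & k = 'C(j.+1, 2) + t].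
Proof.
elim: m k => [|m IH] k; first by [].
rewrite bin2S => hk; case: (ltnP k 'C(m.+1, 2)) => [/IH [j [t [jm tj ->]]]|km].
  by exists j, t; split => //; apply: ltnW.
by exists m, (k - 'C(m.+1, 2)); split => //; lia.
Qed.

Variable tau : forall j : nat, 'S_j.

Let column j := [seq ((tau j i : nat), j) | i <- enum 'I_j].

Let size_columns j : size (flatten [seq column k | k <- iota 1 j]) = 'C(j.+1, 2).
Proof.
elim: j => [|j IH] //.
have -> : iota 1 j.+1 = iota 1 j ++ [:: j.+1] by rewrite -(addn1 j) iotaD /= add1n addn1.
rewrite map_cat flatten_cat size_cat IH bin2S /= cats0.
by rewrite size_map size_enum_ord.
Qed.

Lemma nth_colperm_ordering n j t : j.+1 < n -> t <= j ->
  nth (0, 0) (colperm_ordering n tau) ('C(j.+1, 2) + t) = ((tau j.+1 (inord t) : nat), j.+1).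
Proof.
move=> jn tj; rewrite /colperm_ordering.
have -> : n.-1 = j + (n.-1 - j).-1.+1 by lia.
rewrite iotaD map_cat flatten_cat -/column.
rewrite nth_cat size_columns ltnNge leq_addr /= addKn add1n /= nth_cat.
rewrite size_map size_enum_ord ltnS tj (nth_map ord0) ?size_enum_ord ?ltnS //.
by congr (_, _); congr (nat_of_ord (tau _ _)); apply: val_inj; rewrite /= nth_enum_ord ?inordK.
Qed.

End ColumnOrdering.

Section RotationAction.
Variables (R : realType) (n : nat).
Local Notation C := (complex R).
(* Entries are addressed by natural numbers, as the pivot pairs of an ordering are;
   [inord] is only ever applied to indices below [n.+1]. *)
Local Notation ent M r s := (M (@inord n r) (@inord n s)).

Definition off2 k (X : 'M[C]_n.+1) : R :=
  \sum_(0 <= r < k) \sum_(0 <= s < k | r != s) cabs2 (ent X r s).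

Definition colnorm2 k c (X : 'M[C]_n.+1) : R := \sum_(0 <= r < k) cabs2 (ent X r c).

Lemma off2_ge0 k X : 0 <= off2 k X.
Proof. by do 2![apply: sumr_ge0 => ? _]; apply: cabs2_ge0. Qed.

Lemma colnorm2_ge0 k c X : 0 <= colnorm2 k c X.
Proof. by apply: sumr_ge0 => r _; apply: cabs2_ge0. Qed.

Lemma off2_1 X : off2 1 X = 0.
Proof. by rewrite /off2 big_nat1 big_mkcond big_nat1 eqxx. Qed.

Lemma off2S X k : is_hermitian X -> (k < n.+1)%N ->
  off2 k.+1 X = off2 k X + 2 * colnorm2 k k X.
Proof.
move=> hX kn; rewrite /off2 /colnorm2 big_nat_recr //=.
have row r : (0 <= r < k)%N -> \sum_(0 <= s < k.+1 | r != s) cabs2 (ent X r s) =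
    \sum_(0 <= s < k | r != s) cabs2 (ent X r s) + cabs2 (ent X r k).
  by case/andP=> _ rk; rewrite big_mkcond big_nat_recr //= -big_mkcond /= ltn_eqF.
have last_row : \sum_(0 <= s < k.+1 | k != s) cabs2 (ent X k s) =
    \sum_(0 <= s < k) cabs2 (ent X s k).
  rewrite big_mkcond big_nat_recr //= eqxx addr0; apply: eq_big_nat => s /andP[_ sk].
  by rewrite eq_sym ltn_eqF // (hermitian_entry _ _ hX) cabs2_conj.
by rewrite last_row (eq_big_nat _ _ row) big_split /=; lra.
Qed.

Lemma inord_eqE a b : (a < n.+1)%N -> (b < n.+1)%N -> (@inord n a == inord b) = (a == b).
Proof. by move=> an bn; rewrite -val_eqE /= !inordK. Qed.

Lemma offnorm_off2 X : offnorm X ^+ 2 = off2 n.+1 X.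
Proof.
rewrite /offnorm sqr_sqrtr; last by do 2![apply: sumr_ge0 => ? _]; apply: cabs2_ge0.
rewrite /off2 big_mknat; apply: eq_big_nat => r /andP[_ rn].
rewrite big_mknat big_nat_cond [RHS]big_nat_cond; apply: eq_bigl => s.
by case sn: (s < n.+1)%N; rewrite ?andbF //= inord_eqE.
Qed.

Lemma rotE i j (phi alpha : R) a b : (a < n.+1)%N -> (b < n.+1)%N ->
  ent (Defs.rot n.+1 i j phi alpha) a b =
  if a == b then (if (a == i) || (a == j) then rot_ii phi else 1)
  else if (a == i) && (b == j) then rot_ij phi alpha
  else if (a == j) && (b == i) then rot_ji phi alpha else 0.
Proof. by move=> an bn; rewrite mxE inord_eqE // !inordK. Qed.

Section PivotPair.
Variables (i j : nat) (phi alpha : R).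
Hypotheses (ij : (i < j)%N) (jn : (j < n.+1)%N).
Local Notation U := (Defs.rot n.+1 i j phi alpha).

Let i_lt : (i < n.+1)%N. Proof. exact: ltn_trans ij jn. Qed.
Let i_neq_j : i != j. Proof. by rewrite ltn_eqF. Qed.
Let j_neq_i : j != i. Proof. by rewrite gtn_eqF. Qed.

Let rot_off_row a b : (a < n.+1)%N -> (b < n.+1)%N -> a != i -> a != j ->
  ent U a b = (a == b)%:R.
Proof. by move=> an bn ai aj; rewrite rotE // (negbTE ai) (negbTE aj); case: (a == b). Qed.

Let rot_row_i b : (b < n.+1)%N -> b != i -> b != j -> ent U i b = 0.
Proof.
by move=> bn bi bj; rewrite rotE // eq_sym (negbTE bi) eqxx (negbTE bj) (negbTE i_neq_j).
Qed.

Let rot_row_j b : (b < n.+1)%N -> b != i -> b != j -> ent U j b = 0.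
Proof.
by move=> bn bi bj; rewrite rotE // eq_sym (negbTE bj) andbF eqxx (negbTE bi).
Qed.

Let sum_rot (G F : nat -> C) s : (s < n.+1)%N ->
  (forall q, (q < n.+1)%N -> q != i -> q != j -> F q = (q == s)%:R) ->
  \sum_(0 <= q < n.+1) G q * F q =
  G i * F i + G j * F j + (if (s != i) && (s != j) then G s else 0).
Proof.
move=> sn hF; rewrite (bigD2_nat_all _ i_lt jn i_neq_j); congr (_ + _).
rewrite big_nat_cond (eq_bigr (fun q => G q * (q == s)%:R)).
  by rewrite -big_nat_cond big_nat_mul_delta sn.
by move=> q /and3P[/andP[_ qn] qi qj]; rewrite hF.
Qed.

Let mulmx_rotE (M : 'M[C]_n.+1) r s : (r < n.+1)%N -> (s < n.+1)%N ->
  ent (M *m U) r s = ent M r i * ent U i s + ent M r j * ent U j s +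
    (if (s != i) && (s != j) then ent M r s else 0).
Proof.
move=> rn sn; rewrite mxE big_mknat (@sum_rot (fun q => ent M r q) (fun q => ent U q s) s) //.
by move=> q qn qi qj; rewrite rot_off_row.
Qed.

Let rot_mulmxE (M : 'M[C]_n.+1) r s : (r < n.+1)%N -> (s < n.+1)%N ->
  ent (ctrmx U *m M) r s = conjc (ent U i r) * ent M i s + conjc (ent U j r) * ent M j s +
    (if (r != i) && (r != j) then ent M r s else 0).
Proof.
move=> rn sn; rewrite mxE big_mknat.
rewrite (eq_bigr (fun q => ent M q s * conjc (ent U q r))); last by move=> q _; rewrite !mxE mulrC.
rewrite (@sum_rot (fun q => ent M q s) (fun q => conjc (ent U q r)) r) //.
  by rewrite ![ent M _ s * _]mulrC.
by move=> q qn qi qj; rewrite rot_off_row // rmorph_nat.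
Qed.

Let rows_ij_split (X : 'M[C]_n.+1) k : (i < k)%N -> (j < k)%N ->
  \sum_(0 <= s < k | i != s) cabs2 (ent X i s) + \sum_(0 <= s < k | j != s) cabs2 (ent X j s) =
  cabs2 (ent X i j) + cabs2 (ent X j i) +
  \sum_(0 <= s < k | (s != i) && (s != j)) (cabs2 (ent X i s) + cabs2 (ent X j s)).
Proof.
move=> ik jk; rewrite (bigD1_nat _ jk i_neq_j) (bigD1_nat _ ik j_neq_i) big_split /=.
rewrite (eq_bigl (fun s => (s != i) && (s != j))) => [|s]; last by rewrite eq_sym.
rewrite [in X in _ + (_ + X)](eq_bigl (fun s => (s != i) && (s != j))) => [|s].
  by rewrite -!addrA; congr (_ + _); rewrite addrCA.
by rewrite eq_sym andbC.
Qed.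

Variable M : 'M[C]_n.+1.
Local Notation M' := (ctrmx U *m M *m U).

Let conj_rotE r s : (r < n.+1)%N -> (s < n.+1)%N ->
  ent M' r s = conjc (ent U i r) * ent (M *m U) i s + conjc (ent U j r) * ent (M *m U) j s +
    (if (r != i) && (r != j) then ent (M *m U) r s else 0).
Proof. by move=> rn sn; rewrite -mulmxA rot_mulmxE. Qed.

Lemma conj_rot_fixed r s : (r < n.+1)%N -> (s < n.+1)%N ->
  r != i -> r != j -> s != i -> s != j -> ent M' r s = ent M r s.
Proof.
move=> rn sn ri rj si sj.
rewrite conj_rotE // rot_row_i // rot_row_j // rmorph0 !mul0r !add0r ri rj /=.
by rewrite mulmx_rotE // rot_row_i // rot_row_j // !mulr0 !add0r si sj.
Qed.

Lemma conj_rot_col_i r : (r < n.+1)%N -> r != i -> r != j ->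
  ent M' r i = ent M r i * rot_ii phi + ent M r j * rot_ji phi alpha.
Proof.
move=> rn ri rj.
rewrite conj_rotE // rot_row_i // rot_row_j // rmorph0 !mul0r !add0r ri rj /=.
by rewrite mulmx_rotE // eqxx /= addr0 !rotE // !eqxx (negbTE j_neq_i) /= ?orbT.
Qed.

Lemma conj_rot_col_j r : (r < n.+1)%N -> r != i -> r != j ->
  ent M' r j = ent M r i * rot_ij phi alpha + ent M r j * rot_ii phi.
Proof.
move=> rn ri rj.
rewrite conj_rotE // rot_row_i // rot_row_j // rmorph0 !mul0r !add0r ri rj /=.
by rewrite mulmx_rotE // eqxx andbF addr0 !rotE // !eqxx (negbTE i_neq_j) /= ?orbT.
Qed.

Lemma conj_rot_row_i s : (s < n.+1)%N -> s != i -> s != j ->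
  ent M' i s = conjc (rot_ii phi) * ent M i s + conjc (rot_ji phi alpha) * ent M j s.
Proof.
move=> sn si sj; rewrite conj_rotE // (_ : (i != i) && _ = false) ?eqxx // addr0.
rewrite !mulmx_rotE // (rot_row_i sn si sj) (rot_row_j sn si sj) !mulr0 !add0r si sj.
by rewrite !rotE // !eqxx (negbTE j_neq_i).
Qed.

Lemma conj_rot_row_j s : (s < n.+1)%N -> s != i -> s != j ->
  ent M' j s = conjc (rot_ij phi alpha) * ent M i s + conjc (rot_ii phi) * ent M j s.
Proof.
move=> sn si sj; rewrite conj_rotE // (_ : (j != i) && _ = false) ?eqxx ?andbF // addr0.
rewrite !mulmx_rotE // (rot_row_i sn si sj) (rot_row_j sn si sj) !mulr0 !add0r si sj.
by rewrite !rotE // !eqxx (negbTE i_neq_j) ?orbT.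
Qed.

Lemma conj_rot_col_j_ge r : (r < n.+1)%N -> r != i -> r != j ->
  cos phi ^+ 2 / 2 * cabs2 (ent M r j) - cabs2 (ent M r i) <= cabs2 (ent M' r j).
Proof.
move=> rn ri rj; rewrite conj_rot_col_j // [X in _ <= cabs2 X]addrC.
apply: le_trans (cabs2D_ge _ _); rewrite !cabs2M cabs2_rot_ii.
have : cabs2 (ent M r i) * cabs2 (rot_ij phi alpha) <= cabs2 (ent M r i).
  by rewrite ler_piMr ?cabs2_ge0 ?cabs2_rot_ij_le1.
by lra.
Qed.

Lemma off2_conj_rot k : (j < k)%N -> (k <= n.+1)%N ->
  off2 k M' + cabs2 (ent M i j) + cabs2 (ent M j i) =
  off2 k M + cabs2 (ent M' i j) + cabs2 (ent M' j i).
Proof.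
move=> jk kn; have ik : (i < k)%N by apply: ltn_trans ij jk.
have lt_n q : (q < k)%N -> (q < n.+1)%N by move=> qk; apply: leq_trans qk kn.
rewrite /off2 !(bigD2_nat_all _ ik jk i_neq_j).
have other_rows : \sum_(0 <= r < k | (r != i) && (r != j))
     \sum_(0 <= s < k | r != s) cabs2 (ent M' r s) =
   \sum_(0 <= r < k | (r != i) && (r != j))
     \sum_(0 <= s < k | r != s) cabs2 (ent M r s).
  rewrite big_nat_cond [RHS]big_nat_cond.
  apply: eq_bigr => r /and3P[/andP[_ rk] ri rj].
  rewrite !(bigD2_nat _ ik jk i_neq_j ri rj) conj_rot_col_i ?conj_rot_col_j ?lt_n //.
  rewrite rot_row_isometry; congr (_ + _).
  rewrite big_nat_cond [RHS]big_nat_cond.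
  apply: eq_bigr => s /andP[/andP[_ sk] /andP[/andP[_ si] sj]].
  by rewrite conj_rot_fixed ?lt_n.
have mixed_rows : \sum_(0 <= s < k | (s != i) && (s != j))
    (cabs2 (ent M' i s) + cabs2 (ent M' j s)) =
  \sum_(0 <= s < k | (s != i) && (s != j)) (cabs2 (ent M i s) + cabs2 (ent M j s)).
  rewrite big_nat_cond [RHS]big_nat_cond.
  apply: eq_bigr => s /andP[/andP[_ sk] /andP[si sj]].
  by rewrite conj_rot_row_i ?conj_rot_row_j ?lt_n // rot_col_isometry.
by rewrite other_rows !(rows_ij_split _ ik jk) mixed_rows; ring.
Qed.

Lemma colnorm2_conj_rot k c : (j < k)%N -> (k <= c)%N -> (c < n.+1)%N ->
  colnorm2 k c M' = colnorm2 k c M.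
Proof.
move=> jk kc cn; have ik : (i < k)%N by apply: ltn_trans ij jk.
have ci : c != i by rewrite gtn_eqF // (leq_trans ik kc).
have cj : c != j by rewrite gtn_eqF // (leq_trans jk kc).
rewrite /colnorm2 !(bigD2_nat_all _ ik jk i_neq_j).
rewrite conj_rot_row_i ?conj_rot_row_j // rot_col_isometry; congr (_ + _).
rewrite big_nat_cond [RHS]big_nat_cond.
apply: eq_bigr => r /andP[/andP[_ rk] /andP[ri rj]].
by rewrite conj_rot_fixed // (ltn_trans rk (leq_ltn_trans kc cn)).
Qed.

End PivotPair.
End RotationAction.

Section JacobiCycle.
Variables (R : realType) (n : nat) (nu : R).
Variables (A : 'M[complex R]_n.+1) (tau : forall j : nat, 'S_j).
Variables (phi alpha : nat -> R) (As : nat -> 'M[complex R]_n.+1).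
Hypothesis hA : is_hermitian A.
Hypothesis cycleA : jacobi_cycle (colperm_ordering n.+1 tau) A phi alpha As.
Hypothesis nu_gt0 : 0 < nu.
Hypothesis cos_ge : forall k, (k < 'C(n.+1, 2))%N -> nu <= `|cos (phi k)|.

Local Notation ent M r s := (M (@inord n r) (@inord n s)).
(* The [t]-th rotation of column [j.+1] is step [step j t] of the cycle and
   annihilates the entry [(sigma j t, j.+1)]. *)
Local Notation step j t := ('C(j.+1, 2) + t)%N.
Local Notation sigma j t := (nat_of_ord (tau j.+1 (inord t))).
Local Notation U j t :=
  (Defs.rot n.+1 (sigma j t) j.+1 (phi (step j t)) (alpha (step j t))).

Let As0 : As 0 = A. Proof. by case: cycleA. Qed.

Let step_lt j t : (j < n)%N -> (t <= j)%N -> (step j t < 'C(n.+1, 2))%N.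
Proof.
by move=> jn tj; apply: leq_trans (leq_bin2l 2 (jn : j.+2 <= n.+1)%N); rewrite bin2S ltn_add2l.
Qed.

Lemma jacobi_stepE j t : (j < n)%N -> (t <= j)%N ->
  As (step j t).+1 = ctrmx (U j t) *m As (step j t) *m U j t /\
  ent (As (step j t).+1) (sigma j t) j.+1 = 0.
Proof.
move=> jn tj; case: cycleA => _; rewrite -bin2 => /(_ _ (step_lt jn tj)).
rewrite modn_small ?step_lt // nth_colperm_ordering //= => -[-> zero].
by split=> //; apply: zero; rewrite inordK // (ltn_trans (ltn_ord _)).
Qed.

Lemma hermitian_iterate k : (k <= 'C(n.+1, 2))%N -> is_hermitian (As k).
Proof.
elim: k => [|k IH] kN; first by rewrite As0.
have [j [t [jn tj k_eq]]] := bin2_decomp kN; subst k.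
by rewrite (jacobi_stepE jn tj).1; apply/hermitian_ctrmx_conj/IH/ltnW.
Qed.

Let sigma_lt j t : (sigma j t < j.+1)%N. Proof. exact: ltn_ord. Qed.

Lemma pivot_zero_sym j t : (j < n)%N -> (t <= j)%N ->
  ent (As (step j t).+1) j.+1 (sigma j t) = 0.
Proof.
move=> jn tj; have [_ zero] := jacobi_stepE jn tj.
by rewrite (hermitian_entry _ _ (hermitian_iterate (step_lt jn tj))) zero rmorph0.
Qed.

Lemma off2_step j t k : (j < n)%N -> (t <= j)%N -> (j.+1 < k)%N -> (k <= n.+1)%N ->
  off2 k (As (step j t).+1) =
  off2 k (As (step j t)) - 2 * cabs2 (ent (As (step j t)) (sigma j t) j.+1).
Proof.
move=> jn tj jk kn; have zero := (jacobi_stepE jn tj).2; have zero' := pivot_zero_sym jn tj.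
have := off2_conj_rot (phi (step j t)) (alpha (step j t)) (sigma_lt j t) jn (As (step j t)) jk kn.
rewrite -(jacobi_stepE jn tj).1 zero zero' cabs2_0.
rewrite (hermitian_entry _ _ (hermitian_iterate (ltnW (step_lt jn tj)))) cabs2_conj.
by move=> eq_off; lra.
Qed.

Lemma colnorm2_step j t k c : (j < n)%N -> (t <= j)%N ->
  (j.+1 < k)%N -> (k <= c)%N -> (c < n.+1)%N ->
  colnorm2 k c (As (step j t).+1) = colnorm2 k c (As (step j t)).
Proof.
by move=> jn tj jk kc cn; rewrite (jacobi_stepE jn tj).1 (colnorm2_conj_rot _ _ (sigma_lt j t)).
Qed.

Lemma entry_step_fixed j t r s : (j < n)%N -> (t <= j)%N -> (r < n.+1)%N -> (s < n.+1)%N ->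
  r != sigma j t -> r != j.+1 -> s != sigma j t -> s != j.+1 ->
  ent (As (step j t).+1) r s = ent (As (step j t)) r s.
Proof.
by move=> jn tj *; rewrite (jacobi_stepE jn tj).1 (conj_rot_fixed _ _ (sigma_lt j t)).
Qed.

Lemma col_entry_step_ge j t r : (j < n)%N -> (t <= j)%N -> (r < n.+1)%N ->
  r != sigma j t -> r != j.+1 ->
  kappa nu * cabs2 (ent (As (step j t)) r j.+1) - cabs2 (ent (As (step j t)) r (sigma j t))
  <= cabs2 (ent (As (step j t).+1) r j.+1).
Proof.
move=> jn tj rn r_neq r_neq'; rewrite (jacobi_stepE jn tj).1.
apply: le_trans (conj_rot_col_j_ge _ _ (sigma_lt j t) _ _ rn r_neq r_neq'); last by [].
rewrite lerD2r ler_wpM2r ?cabs2_ge0 // kappa_le_cos2 //.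
exact/cos_ge/step_lt.
Qed.

Lemma colnorm2_before_column j k : (j < n)%N -> (k <= 'C(j.+1, 2))%N ->
  colnorm2 j.+1 j.+1 (As k) = colnorm2 j.+1 j.+1 A.
Proof.
move=> jn; elim: k => [|k IH] kC; first by rewrite As0.
have [j' [t [j'j tj' k_eq]]] := bin2_decomp kC; subst k.
by rewrite (@colnorm2_step j' t j.+1 j.+1) ?IH //; lia.
Qed.

Section Column.
Variable j : nat.
Hypothesis jn : (j < n)%N.
Local Notation X0 := (As 'C(j.+1, 2)).

Let lt_n m : (m < j.+1)%N -> (m < n.+1)%N. Proof. by move=> mj; lia. Qed.

Let sigma_neq t t' : (t <= j)%N -> (t' < t)%N -> sigma j t != sigma j t'.
Proof.
move=> tj t't; rewrite (inj_eq val_inj) (inj_eq (@perm_inj _ _)) -(inj_eq val_inj).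
by rewrite /= !inordK ?gtn_eqF // ltnS ltnW // (leq_trans t't).
Qed.

Lemma entry_unchanged_in_column r s t0 : (r < j.+1)%N -> (s < j.+1)%N -> (t0 <= j.+1)%N ->
  (forall t, (t < t0)%N -> (r != sigma j t) && (s != sigma j t)) ->
  ent (As (step j t0)) r s = ent X0 r s.
Proof.
move=> rj sj; elim: t0 => [|t0 IH] t0j fresh; first by rewrite addn0.
have /andP[r_neq s_neq] := fresh t0 (ltnSn t0).
rewrite addnS entry_step_fixed ?lt_n ?(ltn_eqF rj) ?(ltn_eqF sj) //.
by apply: IH => [|t tt0]; [apply: ltnW | apply/fresh/ltnW].
Qed.

Lemma col_entry_column_ge r t0 : (r < j.+1)%N -> (t0 <= j.+1)%N ->
  (forall t, (t < t0)%N -> r != sigma j t) ->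
  kappa nu ^+ t0 * cabs2 (ent X0 r j.+1) - \sum_(0 <= t < t0) cabs2 (ent X0 r (sigma j t))
  <= cabs2 (ent (As (step j t0)) r j.+1).
Proof.
move=> rj; elim: t0 => [|t0 IH] t0j fresh; first by rewrite big_geq // subr0 expr0 mul1r addn0.
have IH_ge := IH (ltnW t0j) (fun t tt0 => fresh t (ltnW tt0)).
have unchanged : ent (As (step j t0)) r (sigma j t0) = ent X0 r (sigma j t0).
  apply: entry_unchanged_in_column; rewrite ?sigma_lt ?(ltnW t0j) // => t tt0.
  by rewrite fresh ?sigma_neq // ltnW.
have step_ge := col_entry_step_ge jn t0j (lt_n rj) (fresh t0 (ltnSn t0)) (negbT (ltn_eqF rj)).
rewrite unchanged in step_ge; rewrite addnS big_nat_recr //= exprS.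
have k_ge0 : 0 <= kappa nu by rewrite ltW ?kappa_gt0.
have S_ge0 : 0 <= \sum_(0 <= t < t0) cabs2 (ent X0 r (sigma j t)).
  by rewrite sumr_ge0 // => t _; apply: cabs2_ge0.
have := ler_wpM2l k_ge0 IH_ge; have := ler_piMl S_ge0 (kappa_le1 nu).
lra.
Qed.

Lemma pivot_ge t : (t <= j)%N ->
  kappa nu ^+ j.+1 * cabs2 (ent X0 (sigma j t) j.+1)
    - \sum_(0 <= t' < t) cabs2 (ent X0 (sigma j t) (sigma j t'))
  <= cabs2 (ent (As (step j t)) (sigma j t) j.+1).
Proof.
move=> tj; apply: le_trans (col_entry_column_ge (sigma_lt j t) (leqW tj) _); last first.
  by move=> t' t't; apply: sigma_neq.
rewrite lerD2r ler_wpM2r ?cabs2_ge0 // ler_wiXn2l ?kappa_le1 ?ltW ?kappa_gt0 //.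
exact: leqW.
Qed.

Lemma off2_column t0 : (t0 <= j.+1)%N ->
  off2 j.+2 (As (step j t0)) =
  off2 j.+2 X0 - 2 * \sum_(0 <= t < t0) cabs2 (ent (As (step j t)) (sigma j t) j.+1).
Proof.
elim: t0 => [|t0 IH] t0j; first by rewrite big_geq // mulr0 subr0 addn0.
by rewrite addnS off2_step // IH ?(ltnW t0j) // big_nat_recr //=; ring.
Qed.

Lemma column_pivots_ge :
  kappa nu ^+ j.+1 * colnorm2 j.+1 j.+1 A - off2 j.+1 X0 <=
  \sum_(0 <= t < j.+1) cabs2 (ent (As (step j t)) (sigma j t) j.+1).
Proof.
apply: le_trans (_ : \sum_(0 <= t < j.+1)
    (kappa nu ^+ j.+1 * cabs2 (ent X0 (sigma j t) j.+1)
     - \sum_(0 <= t' < t) cabs2 (ent X0 (sigma j t) (sigma j t'))) <= _); last first.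
  rewrite big_nat_cond [leRHS]big_nat_cond.
  by apply: ler_sum => t /andP[/andP[_ tj] _]; apply: pivot_ge.
rewrite sumrB -mulr_sumr (sum_perm_nat _ (fun r => cabs2 (ent X0 r j.+1))).
rewrite -/(colnorm2 j.+1 j.+1 X0) colnorm2_before_column // lerD2l lerN2.
apply: le_trans (_ : \sum_(0 <= t < j.+1) \sum_(0 <= t' < j.+1 | t' != t)
    cabs2 (ent X0 (sigma j t) (sigma j t')) <= _).
  rewrite big_nat_cond [leRHS]big_nat_cond; apply: ler_sum => t /andP[/andP[_ tj] _].
  by apply: sum_prefix_le_sum_neq => // x; apply: cabs2_ge0.
rewrite (sum_perm_nat2 _ (fun r s => cabs2 (ent X0 r s))) le_eqVlt; apply/orP; left.
by apply/eqP/eq_bigr => r _; apply: eq_bigl => s; rewrite eq_sym.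
Qed.

End Column.

Lemma off2_columns j : (j <= n)%N -> off2 j.+1 (As 'C(j.+1, 2)) <= cycle_factor nu j * off2 j.+1 A.
Proof.
elim: j => [|j IH] jn; first by rewrite !off2_1 mul0r.
have jC : ('C(j.+1, 2) <= 'C(n.+1, 2))%N by rewrite leq_bin2l // ltnW.
have off2_before : off2 j.+2 (As 'C(j.+1, 2)) =
    off2 j.+1 (As 'C(j.+1, 2)) + 2 * colnorm2 j.+1 j.+1 A.
  by rewrite off2S ?colnorm2_before_column //; apply: hermitian_iterate.
have off2_after := off2_column jn (leqnn j.+1).
rewrite -bin2S off2_before in off2_after; rewrite off2_after (off2S hA) //.
have [g_ge0 g_lt1] := andP (cycle_factor_ge0_lt1 j nu_gt0).
apply: contraction_step (IH (ltnW jn)) (column_pivots_ge jn) => //.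
- by rewrite exprn_gt0 ?kappa_gt0.
- by rewrite exprn_ile1 ?kappa_le1 ?ltW ?kappa_gt0.
- exact: off2_ge0.
- exact: colnorm2_ge0.
- exact: off2_ge0.
- by rewrite sumr_ge0 // => t _; apply: cabs2_ge0.
Qed.

End JacobiCycle.

Theorem theorem3p1 (R : realType) (n : nat) (nu : R) :
  (2 <= n)%N -> 0 < nu ->
  exists gamma : R, 0 <= gamma /\ gamma < 1 /\
    forall (A : 'M[complex R]_n) (O : seq (nat * nat))
           (phi alpha : nat -> R) (As : nat -> 'M[complex R]_n),
      is_hermitian A -> in_Cc n O ->
      jacobi_cycle O A phi alpha As ->
      (forall k : nat, (k < (n * n.-1)./2)%N -> nu <= `|cos (phi k)|) ->
      offnorm (As ((n * n.-1)./2)%N) ^+ 2 <= gamma * offnorm A ^+ 2.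
Proof.
case: n => [|n] // _ nu_gt0; rewrite -bin2.
have /andP[g_ge0 g_lt1] := cycle_factor_ge0_lt1 n nu_gt0.
exists (cycle_factor nu n); do 2!split => //.
move=> A O phi alpha As hA [tau ->] cycleA cos_ge; rewrite !offnorm_off2.
exact: (off2_columns hA cycleA nu_gt0 cos_ge (leqnn n)).
Qed.
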